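(* Let $G$ be a graph and $Y$ a minimal blocking set of $G$. Then: (i) $Y$ contains no vertex that belongs to every minimum vertex cover of $G$; (ii) if $Y$ contains a vertex that belongs to no minimum vertex cover of $G$, then $|Y|=1$; (iii) $Y$ is contained in a single connected component of $G$; (iv) $\mathrm{OPT}(G-Y)+|Y|=\mathrm{OPT}(G)+1$.
   Context: $\mathrm{OPT}(G)$ is the minimum vertex cover size; a minimum vertex cover is one of size $\mathrm{OPT}(G)$. $Y\subseteq V(G)$ is a blocking set of $G$ if no minimum vertex cover of $G$ contains $Y$; it is minimal if no proper subset of $Y$ is a blocking set. *)

(* A finite simple graph G = (T, e) with e : rel T symmetric, irreflexive. *)
From mathcomp Require Import all_boot.
Set Implicit Arguments. Unset Strict Implicit. Unset Printing Implicit Defensive.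

Section VC.
Variables (T : finType) (e : rel T).

Definition vcover_in (V C : {set T}) : bool :=
  (C \subset V) &&
  [forall x in V, forall y in V, e x y ==> (x \in C) || (y \in C)].

(* OPT(G[V]) : minimum size of a vertex cover of G[V] (V itself is a cover,
   so the default #|T| is never the answer unless attained). *)
Definition OPT_in (V : {set T}) : nat :=
  \big[minn/#|T|]_(C : {set T} | vcover_in V C) #|C|.

Definition OPT : nat := OPT_in setT.

Definition OPT_del (Y : {set T}) : nat := OPT_in (~: Y).

Definition min_vcover (C : {set T}) : bool :=
  vcover_in setT C && (#|C| == OPT).

Definition blocking (Y : {set T}) : bool :=
  [forall C : {set T}, min_vcover C ==> ~~ (Y \subset C)].

Definition minimal_blocking (Y : {set T}) : bool :=
  blocking Y && [forall Z : {set T}, (Z \proper Y) ==> ~~ blocking Z].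

End VC.

From mathcomp Require Import all_boot.
From mathcomp Require Import zify.

Set Implicit Arguments.
Unset Strict Implicit.
Unset Printing Implicit Defensive.

(* The proof only uses two elementary facts about vertex covers:
   - covers of G and of G - Y correspond: removing Y from a cover of G gives a
     cover of G - Y, and adding Y to a cover of G - Y gives a cover of G;
   - covers can be glued along an edge-closed vertex set K (a union of
     connected components): taking A inside K and B outside K gives a cover,
     and if A and B are minimum so is the glued cover.
   A minimal blocking set Y is nonempty and each proper subset of Y lies in
   some minimum cover.  Then (i) and (ii) follow directly from this property,
   (iii) follows from gluing the covers containing Y \cap K and Y \ K, where K
   is the component of a vertex of Y, and (iv) combines the lower bound
   OPT(G) < OPT(G - Y) + |Y| (valid for every blocking set) with the upper
   bound obtained from a minimum cover containing Y minus one vertex. *)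

Lemma bigminn_le (I : eqType) (s : seq I) (P : pred I) (F : I -> nat) d j :
  j \in s -> P j -> \big[minn/d]_(i <- s | P i) F i <= F j.
Proof.
elim: s => //= i s IHs; rewrite inE big_cons => /predU1P[<- -> | js Pj].
  exact: geq_minl.
by case: (P i); rewrite ?geq_min IHs ?orbT.
Qed.

Lemma bigminn_attained (I : Type) (s : seq I) (P : pred I) (F : I -> nat) d :
  \big[minn/d]_(i <- s | P i) F i = d \/
  exists2 j, P j & \big[minn/d]_(i <- s | P i) F i = F j.
Proof.
apply: (big_ind (fun m => m = d \/ exists2 j, P j & m = F j)) => [|m n Hm Hn|j Pj].
- by left.
- by case: (leqP m n).
- by right; exists j.
Qed.

Section VertexCovers.
Variables (T : finType) (e : rel T).
Implicit Types (V C D Y Z K : {set T}).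

Lemma vcoverP V C :
  reflect (C \subset V /\
           forall x y, x \in V -> y \in V -> e x y -> (x \in C) || (y \in C))
          (vcover_in e V C).
Proof.
apply: (iffP andP) => [[CV /forall_inP cov] | [CV cov]]; split => //.
  by move=> x y xV yV; move/forall_inP/(_ y yV)/implyP: (cov x xV).
by apply/forall_inP => x xV; apply/forall_inP => y yV; apply/implyP; exact: cov.
Qed.

Lemma OPT_in_le V C : vcover_in e V C -> OPT_in e V <= #|C|.
Proof. by move=> covC; apply: bigminn_le; rewrite ?mem_index_enum. Qed.

(* ... and it is attained, since V itself is a cover of G[V]. *)
Lemma OPT_in_attained V : exists2 C, vcover_in e V C & #|C| = OPT_in e V.
Proof.
have covV : vcover_in e V V by apply/vcoverP; split => // x y ->.
have [OPT_T | [C covC OPT_C]] := bigminn_attained (index_enum {set T})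
  (vcover_in e V) (fun C => #|C|) #|T|; last by exists C; last exact: esym OPT_C.
exists V => //; apply/eqP; rewrite eqn_leq OPT_in_le // andbT.
by have -> : OPT_in e V = #|T| := OPT_T; exact: max_card.
Qed.

Lemma min_vcover_exists : exists C, min_vcover e C.
Proof.
have [C covC cardC] := OPT_in_attained setT.
by exists C; apply/andP; split; last exact/eqP.
Qed.

Lemma vcover_setD C Y : vcover_in e setT C -> vcover_in e (~: Y) (C :\: Y).
Proof.
move=> /vcoverP[_ cov]; apply/vcoverP; split; first exact: subsetDr.
move=> x y; rewrite !inE => xY yY /(cov x y (in_setT _) (in_setT _)).
by rewrite xY yY.
Qed.

Lemma vcover_setU D Y : vcover_in e (~: Y) D -> vcover_in e setT (D :|: Y).
Proof.
move=> /vcoverP[_ cov]; apply/vcoverP; split => [|x y _ _ exy]; first exact: subsetT.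
rewrite !inE; case xY: (x \in Y); first by rewrite orbT.
case yY: (y \in Y); first by rewrite !orbT.
have [xY' yY'] : x \in ~: Y /\ y \in ~: Y by rewrite !inE xY yY.
by case/orP: (cov x y xY' yY' exy) => ->; rewrite ?orbT.
Qed.

Lemma OPT_del_setI C Y : min_vcover e C -> OPT_del e Y + #|Y :&: C| <= OPT e.
Proof.
move=> /andP[covC /eqP <-]; rewrite -(cardsID Y C) [C :&: Y]setIC addnC leq_add2l.
exact/OPT_in_le/vcover_setD.
Qed.

Lemma blockingP Y :
  reflect (forall C, min_vcover e C -> ~~ (Y \subset C)) (blocking e Y).
Proof. by apply: (iffP forallP) => block C; [apply/implyP/block | apply/implyP/block]. Qed.

(* Adding Y to an optimal cover of G - Y gives a cover of G containing Y; when
   Y is blocking it is not minimum, whence OPT(G) < OPT(G - Y) + |Y|. *)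
Lemma blocking_OPT_del Y : blocking e Y -> OPT e < OPT_del e Y + #|Y|.
Proof.
move=> /blockingP blockY; have [D covD cardD] := OPT_in_attained (~: Y).
have covDY := vcover_setU covD.
have notOPT : #|D :|: Y| != OPT e.
  apply/eqP => cardDY; have minDY : min_vcover e (D :|: Y).
    by rewrite /min_vcover covDY cardDY eqxx.
  by move: (blockY _ minDY); rewrite subsetUr.
rewrite /OPT_del -cardD; apply: leq_trans (leq_card_setU D Y).
by rewrite ltn_neqAle eq_sym notOPT OPT_in_le.
Qed.

Lemma minimal_blocking_proper Y Z :
  minimal_blocking e Y -> Z \proper Y -> exists2 C, min_vcover e C & Z \subset C.
Proof.
move=> /andP[_ /forallP/(_ Z)/implyP minY] /minY.
by case/forallPn => C; rewrite negb_imply negbK => /andP[]; exists C.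
Qed.

Lemma minimal_blocking_mem Y v :
  minimal_blocking e Y -> v \in Y -> exists2 C, min_vcover e C & Y :\ v \subset C.
Proof. by move=> minY vY; apply: (minimal_blocking_proper minY); exact: properD1. Qed.

Lemma blocking_neq0 Y : blocking e Y -> Y != set0.
Proof.
move=> /blockingP blockY; have [C minC] := min_vcover_exists.
by apply: contraNneq (blockY C minC) => ->; exact: sub0set.
Qed.

Lemma minimal_blocking_subset Y Z :
  minimal_blocking e Y -> blocking e Z -> Z \subset Y -> Z = Y.
Proof.
move=> /andP[_ /forallP/(_ Z)/implyP minY] blockZ sZY; apply/eqP.
by apply: contraLR blockZ => neqZY; apply: minY; rewrite properEneq neqZY.
Qed.

(* Upper bound in (iv): if Y minus a vertex lies in a minimum cover C, then
   |Y \cap C| >= |Y| - 1, whence OPT(G - Y) + |Y| <= OPT(G) + 1. *)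
Lemma minimal_blocking_OPT_del Y :
  minimal_blocking e Y -> OPT_del e Y + #|Y| <= (OPT e).+1.
Proof.
move=> minY; have /andP[blockY _] := minY.
have [y yY] := set0Pn _ (blocking_neq0 blockY).
have [C minC sC] := minimal_blocking_mem minY yY.
rewrite (cardsD1 y Y) yY add1n addnS ltnS; apply: leq_trans (OPT_del_setI Y minC).
by rewrite leq_add2l subset_leq_card // subsetI sC subD1set.
Qed.

Definition glue K A B : {set T} := (A :&: K) :|: (B :\: K).

Lemma card_glue K A B : #|glue K A B| = #|A :&: K| + #|B :\: K|.
Proof.
rewrite /glue cardsU (_ : (A :&: K) :&: (B :\: K) = set0) ?cards0 ?subn0 //.
by apply/setP => x; rewrite !inE; case: (x \in K); rewrite ?andbF.
Qed.

Lemma vcover_glue K A B : closed e K ->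
  vcover_in e setT A -> vcover_in e setT B -> vcover_in e setT (glue K A B).
Proof.
move=> closedK /vcoverP[_ covA] /vcoverP[_ covB].
apply/vcoverP; split => [|x y _ _ exy]; first exact: subsetT.
rewrite !inE -(closedK x y exy); case: (x \in K); rewrite ?andbT ?andbF ?orbF /=.
  by apply: covA; rewrite ?in_setT.
by apply: covB; rewrite ?in_setT.
Qed.

(* The two gluings of minimum covers A, B are covers whose sizes add up to
   |A| + |B| = 2 OPT(G), hence both are minimum. *)
Lemma min_vcover_glue K A B : closed e K ->
  min_vcover e A -> min_vcover e B -> min_vcover e (glue K A B).
Proof.
move=> closedK /andP[covA /eqP cardA] /andP[covB /eqP cardB].
have le_AB := OPT_in_le (vcover_glue closedK covA covB).
have le_BA := OPT_in_le (vcover_glue closedK covB covA).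
rewrite /min_vcover vcover_glue //=; move: le_AB le_BA; rewrite !card_glue.
by have := cardsID K A; have := cardsID K B; rewrite /OPT in cardA cardB *; lia.
Qed.

(* A minimal blocking set does not meet two sides of an adjacency-closed set:
   otherwise Y \cap K and Y \ K are proper subsets lying in minimum covers
   A and B, and the minimum cover glued from A and B contains Y. *)
Lemma minimal_blocking_closed K Y : closed e K -> minimal_blocking e Y ->
  Y \subset K \/ [disjoint Y & K].
Proof.
move=> closedK minY; have /andP[/blockingP blockY _] := minY.
case YK: (Y \subset K); first by left.
case: (boolP [disjoint Y & K]) => [|YnK]; first by right.
have [|A minA sA] := minimal_blocking_proper (Z := Y :&: K) minY.
  by rewrite properEneq subsetIl andbT; apply: contraFneq YK => <-; exact: subsetIr.
have [|B minB sB] := minimal_blocking_proper (Z := Y :\: K) minY.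
  by rewrite properEneq subsetDl andbT; apply: contraNneq YnK => /setDidPl.
exfalso; move/negP: (blockY _ (min_vcover_glue closedK minA minB)); apply.
apply/subsetP => x xY; rewrite /glue !inE; case xK: (x \in K).
  by rewrite (subsetP sA) // inE xY xK.
by rewrite (subsetP sB) ?orbT // inE xY xK.
Qed.

(* Part (iii): the component of x is closed under adjacency since e is
   symmetric, so it contains all of Y. *)
Lemma minimal_blocking_connect Y x y : symmetric e -> minimal_blocking e Y ->
  x \in Y -> y \in Y -> connect e x y.
Proof.
move=> e_sym minY xY yY.
have closedx : closed e [set z | connect e x z].
  by move=> u w euw; rewrite !inE; exact: (connect_closed (sym_connect_sym e_sym) x euw).
case: (minimal_blocking_closed closedx minY) => [/subsetP/(_ y yY) | /disjoint_setI0/setP/(_ x)].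
  by rewrite inE.
by rewrite !inE xY connect0.
Qed.

End VertexCovers.

Theorem mainTheorem11 (T : finType) (e : rel T)
  (e_sym : symmetric e) (e_irr : irreflexive e) (Y : {set T})
  (hY : minimal_blocking e Y) :
  (* (i) *)
  (forall v, v \in Y -> ~ (forall C : {set T}, min_vcover e C -> v \in C)) /\
  (* (ii) *)
  ((exists2 v, v \in Y & forall C : {set T}, min_vcover e C -> v \notin C) ->
     #|Y| = 1) /\
  (* (iii) *)
  (forall x y, x \in Y -> y \in Y -> connect e x y) /\
  (* (iv) *)
  OPT_del e Y + #|Y| = OPT e + 1.
Proof.
have /andP[blockY _] := hY; have /blockingP notsubY := blockY.
split; [|split; [|split]].
- move=> v vY in_all; have [C minC sC] := minimal_blocking_mem hY vY.
  by move/negP: (notsubY C minC); apply; rewrite -(setD1K vY) subUset sub1set in_all.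
- move=> [v vY notin_all]; have block_v : blocking e [set v].
    by apply/blockingP => C /notin_all; rewrite sub1set.
  by rewrite -(minimal_blocking_subset hY block_v) ?sub1set ?cards1.
- by move=> x y; exact: minimal_blocking_connect.
- by apply/eqP; rewrite eqn_leq addn1 minimal_blocking_OPT_del // blocking_OPT_del.
Qed.
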